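(* Consider an $[[n,k]]$ stabilizer code with Clifford encoder $U_E$, stabilizer group $\mathcal S$, set of syndrome representatives $T=\{E_s\}$ and correction operators $C_s=E_s$, and let $\{\sqrt{p_i}E_i\}$ be the Kraus operators of the $n$-qubit depolarizing channel. Let $s_i$ be the error syndrome of $E_i$ and \[ W_{l,i,s}=(I^{\otimes k}\otimes\langle l|)\,U_E^\dagger C_sP_s\sqrt{p_i}E_iU_E\,(I^{\otimes k}\otimes|0\rangle^{\otimes n-k}). \] Then \[ \frac{1}{2^{2k}}\sum_l\left|\mathrm{tr}(W_{l,i,s_i})\right|^2=\begin{cases}p_i,& E_i\in T\times\mathcal S,\\ 0,&\text{otherwise},\end{cases} \] where $T\times\mathcal S=\{hg: h\in T,\ g\in\mathcal S\}$ (operators compared up to phase).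
   Context: Pauli errors are tensor products of $I,X,Y,Z$ (phases ignored). $U_E$ is an $n$-qubit Clifford unitary; the code space is $\{U_E(|\psi\rangle\otimes|0\rangle^{\otimes n-k})\}$, stabilized by the abelian group $\mathcal S$ generated by $g_j=U_EZ_{j+k}U_E^\dagger$, $j=1,\dots,n-k$. The error syndrome of a Pauli $E$ is $s\in\{0,1\}^{n-k}$ with $s_j=0$ iff $E$ commutes with $g_j$. Syndrome projectors: $P_s=\prod_{j=1}^{n-k}\frac{I+(-1)^{s_j}g_j}{2}$. A set of syndrome representatives $T$ consists of one Pauli operator $E_s$ with syndrome $s$ for each $s\in\{0,1\}^{n-k}$, with $E_0=I$; the correction for outcome $s$ is $C_s=E_s$. The index $l$ runs over the computational basis of the $n-k$ ancilla qubits. The $n$-qubit depolarizing channel with rate $p$ has Kraus operators $\sqrt{p_i}E_i$, $E_i$ ranging over the $4^n$ Pauli operators, with $p_i=(1-\frac34p)^{n-w}(\frac p4)^w$ where $w$ is the weight (number of non-identity factors) of $E_i$. *)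

From mathcomp Require Import all_boot all_order all_algebra all_field.
Import Order.TTheory GRing.Theory Num.Theory.
Local Open Scope ring_scope.

(* Qubit ordering: an index i : 'I_(2^n) of the computational basis encodes
   the bit string b_0 ... b_(n-1) with qubit 0 the most significant bit. *)
Definition qbit (n : nat) (q : 'I_n) (i : nat) : bool :=
  odd (i %/ 2 ^ (n.-1 - q))%N.

(* Single-qubit Paulis, coded 0 = I, 1 = X, 2 = Y, 3 = Z; entry (x,y). *)
Definition sigma (a : 'I_4) (x y : bool) : algC :=
  match val a with
  | 0 => (x == y)%:R
  | 1 => (x != y)%:R
  | 2 => if x == y then 0 else (if x then 'i else - 'i)
  | _ => if x == y then (if x then -1 else 1) else 0
  end.

(* Pauli strings on n qubits (phases ignored). *)
Definition pauli_string (n : nat) := {ffun 'I_n -> 'I_4}.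

Definition pauli_op (n : nat) (a : pauli_string n) : 'M[algC]_(2 ^ n) :=
  \matrix_(i, j) \prod_(q < n) sigma (a q) (qbit n q i) (qbit n q j).

Definition weight (n : nat) (a : pauli_string n) : nat :=
  #|[set q | a q != ord0]|.

Definition adj (m p : nat) (A : 'M[algC]_(m, p)) : 'M[algC]_(p, m) :=
  (map_mx Num.conj A)^T.

Definition unitary (N : nat) (U : 'M[algC]_N) : Prop :=
  U *m adj N N U = 1%:M /\ adj N N U *m U = 1%:M.

Definition clifford (n : nat) (U : 'M[algC]_(2 ^ n)) : Prop :=
  unitary (2 ^ n) U /\
  forall a : pauli_string n, exists (b : pauli_string n) (c : algC),
      U *m pauli_op n a *m adj _ _ U = c *: pauli_op n b.

Definition Zstring (n q : nat) : pauli_string n :=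
  [ffun q' : 'I_n => if val q' == q then (inord 3 : 'I_4) else ord0].

(* generators g_j = U Z_(k+j) U^dagger, j < n - k (0-indexed; paper's
   Z_(j+k) with 1-indexed j and qubits). *)
Definition gen_g (n k : nat) (U : 'M[algC]_(2 ^ n)) (j : 'I_(n - k))
  : 'M[algC]_(2 ^ n) :=
  U *m pauli_op n (Zstring n (k + j)) *m adj _ _ U.

Inductive in_stab (n k : nat) (U : 'M[algC]_(2 ^ n)) : 'M[algC]_(2 ^ n) -> Prop :=
  | stab_one : @in_stab n k U 1%:M
  | stab_gen j : @in_stab n k U (gen_g n k U j)
  | stab_mul A B : @in_stab n k U A -> @in_stab n k U B -> @in_stab n k U (A *m B).

Definition syndrome_t (n k : nat) := {ffun 'I_(n - k) -> bool}.

Definition syndrome (n k : nat) (U : 'M[algC]_(2 ^ n)) (E : 'M[algC]_(2 ^ n))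
  : syndrome_t n k :=
  [ffun j => ~~ (E *m gen_g n k U j == gen_g n k U j *m E)].

Definition syndrome_proj (n k : nat) (U : 'M[algC]_(2 ^ n)) (s : syndrome_t n k)
  : 'M[algC]_(2 ^ n) :=
  \big[mulmx/1%:M]_(j < n - k)
     (2%:R^-1 *: (1%:M + ((-1) ^+ s j) *: gen_g n k U j)).

Definition identity_string (n : nat) : pauli_string n := [ffun _ => ord0].

Definition syndrome_reps (n k : nat) (U : 'M[algC]_(2 ^ n))
  (Es : syndrome_t n k -> pauli_string n) : Prop :=
  (forall s, syndrome n k U (pauli_op n (Es s)) = s) /\
  Es [ffun _ => false] = identity_string n.

Definition depol_prob (n : nat) (p : algC) (a : pauli_string n) : algC :=
  (1 - 3%:R / 4%:R * p) ^+ (n - weight n a) * (p / 4%:R) ^+ weight n a.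

(* (I^{(x)k} (x) <l|) : 2^k x 2^n, data qubits most significant *)
Definition braL (n k : nat) (l : nat) : 'M[algC]_(2 ^ k, 2 ^ n) :=
  \matrix_(a, i) ((i : nat) == (a * 2 ^ (n - k) + l)%N)%:R.

(* (I^{(x)k} (x) |0>^{(x) n-k}) : 2^n x 2^k *)
Definition ket0 (n k : nat) : 'M[algC]_(2 ^ n, 2 ^ k) :=
  \matrix_(i, a) ((i : nat) == (a * 2 ^ (n - k))%N)%:R.

Definition Wop (n k : nat) (U : 'M[algC]_(2 ^ n))
  (Es : syndrome_t n k -> pauli_string n) (p : algC)
  (l : nat) (a : pauli_string n) (s : syndrome_t n k) : 'M[algC]_(2 ^ k) :=
  braL n k l *m adj _ _ U *m pauli_op n (Es s) *m syndrome_proj n k U s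
    *m (sqrtC (depol_prob n p a) *: pauli_op n a) *m U *m ket0 n k.

Definition in_TxS (n k : nat) (U : 'M[algC]_(2 ^ n))
  (Es : syndrome_t n k -> pauli_string n) (E : 'M[algC]_(2 ^ n)) : Prop :=
  exists (s : syndrome_t n k) (g : 'M[algC]_(2 ^ n)) (c : algC),
    @in_stab n k U g /\ E = c *: (pauli_op n (Es s) *m g).

From mathcomp Require Import all_boot all_order all_algebra all_field.
From mathcomp Require Import zify.
Import Order.TTheory GRing.Theory Num.Theory.
Local Open Scope ring_scope.

(* Moving E past the syndrome projector turns P_(syndrome E) into P_0, which fixes the
   code space, so W = sqrt(p) (I (x) <l|) U^dag E_s E U (I (x) |0>). As U is Clifford,
   U^dag E_s E U = lam P_d for a Pauli string d and a phase |lam| = 1. The matrix element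
   factorises over the qubits: the trace over the k data qubits is 2^k if d is trivial
   there and 0 otherwise, while the squared ancilla amplitudes |<l|P|0>|^2 sum to 1.
   Finally d is trivial on the data qubits iff E is in T x S: conjugating S by U gives
   exactly the Pauli strings that act on the ancillas by I and Z only, and E_s E, having
   trivial syndrome, commutes with every generator, i.e. U^dag E_s E U commutes with
   every ancilla Z. *)

(** * Qubit bits and tensor-product matrices *)

(* [qbit] with the qubit index in nat, so that products over [0 <= q < n] can be split. *)
Definition qbitn (n q i : nat) : bool := odd (i %/ 2 ^ (n.-1 - q)).

Lemma qbitn_split k m q a l : (l < 2 ^ m)%N -> (q < k + m)%N ->
  qbitn (k + m) q (a * 2 ^ m + l) =
  if (q < k)%N then qbitn k q a else qbitn m (q - k) l.
Proof.
move=> lm qkm; rewrite /qbitn; case: ifP => qk.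
  have -> : ((k + m).-1 - q = m + (k.-1 - q))%N.
    by case: k qk qkm => // k' qk qkm /=; lia.
  by rewrite expnD divnMA divnMDl ?expn_gt0 // (divn_small lm) addn0.
have -> : ((k + m).-1 - q = m.-1 - (q - k))%N by lia.
have -> : (2 ^ m = 2 ^ (q - k).+1 * 2 ^ (m.-1 - (q - k)))%N.
  by rewrite -expnD; congr (2 ^ _)%N; lia.
by rewrite mulnA divnMDl ?expn_gt0 // oddD oddM oddX /= andbF.
Qed.

Lemma qbitn_high k m q a : (k <= q)%N -> (q < k + m)%N ->
  qbitn (k + m) q (a * 2 ^ m) = false.
Proof.
move=> kq qkm; rewrite -[(a * 2 ^ m)%N]addn0 qbitn_split ?expn_gt0 //.
by rewrite ltnNge kq /qbitn div0n.
Qed.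

Lemma qbitn_low k m q a : (q < k)%N -> qbitn (k + m) q (a * 2 ^ m) = qbitn k q a.
Proof.
move=> qk; rewrite -[(a * 2 ^ m)%N]addn0 qbitn_split ?expn_gt0 ?qk //.
exact: leq_trans qk (leq_addr _ _).
Qed.

Lemma sum_nat_mul_split (A M : nat) (F : nat -> algC) :
  \sum_(0 <= i < A * M) F i = \sum_(0 <= a < A) \sum_(0 <= l < M) F (a * M + l)%N.
Proof.
elim: A => [|A IH]; first by rewrite mul0n !big_geq.
rewrite big_nat_recr //= -IH mulSn addnC (big_cat_nat _ (leq_addr _ _)) //=.
congr (_ + _); rewrite -{1}(add0n (A * M)%N) big_addn addKn.
by apply: eq_bigr => i _; rewrite addnC.
Qed.

Lemma sum_prod_qbitn (k : nat) (F : nat -> bool -> algC) :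
  \sum_(0 <= i < 2 ^ k) \prod_(0 <= q < k) F q (qbitn k q i) =
  \prod_(0 <= q < k) (F q false + F q true).
Proof.
elim: k F => [|k IH] F; first by rewrite expn0 big_nat1 !big_geq.
have split_top b l : (b < 2)%N -> (l < 2 ^ k)%N ->
   \prod_(0 <= q < k.+1) F q (qbitn k.+1 q (b * 2 ^ k + l)) =
   F 0%N (odd b) * \prod_(0 <= q < k) F q.+1 (qbitn k q l).
  move=> b2 lk; rewrite big_nat_recl //; congr (_ * _).
    have := qbitn_split 1 k 0 b l lk isT; rewrite add1n => ->.
    by case: b b2 => [|[|]].
  apply: congr_big_nat => // q /andP[_ qk].
  by have := qbitn_split 1 k q.+1 b l lk; rewrite add1n ltnS subn1 => ->.
rewrite expnS sum_nat_mul_split big_nat_recl // -(IH (fun q => F q.+1)) mulrDl.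
rewrite big_nat_recr //= big_nat1.
rewrite (eq_big_nat _ _ (fun l lk => split_top 0%N l isT (proj2 (andP lk)))).
by rewrite (eq_big_nat _ _ (fun l lk => split_top 1%N l isT (proj2 (andP lk)))) -!mulr_sumr.
Qed.

Lemma qbitn_inj k i j : (i < 2 ^ k)%N -> (j < 2 ^ k)%N ->
  (forall q, (q < k)%N -> qbitn k q i = qbitn k q j) -> i = j.
Proof.
elim: k i j => [|k IH] i j; first by rewrite expn0 !ltnS !leqn0 => /eqP-> /eqP->.
move=> ik jk eq_bits.
have lt_mod x : (x %% 2 ^ k < 2 ^ k)%N by rewrite ltn_mod expn_gt0.
have lt_div x : (x < 2 ^ k.+1)%N -> (x %/ 2 ^ k < 2)%N.
  by rewrite ltn_divLR ?expn_gt0 // -expnS.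
rewrite -[k.+1]add1n (divn_eq i (2 ^ k)) (divn_eq j (2 ^ k)) in eq_bits.
rewrite (divn_eq i (2 ^ k)) (divn_eq j (2 ^ k)).
have := eq_bits 0%N isT; rewrite !qbitn_split // /qbitn /= !divn1 => eq_top.
have -> : (i %/ 2 ^ k = j %/ 2 ^ k)%N.
  move: eq_top (lt_div i ik) (lt_div j jk).
  by case: (i %/ 2 ^ k)%N => [|[|]] //; case: (j %/ 2 ^ k)%N => [|[|]].
congr (_ + _)%N; apply: IH => // q qk.
by have := eq_bits q.+1; rewrite !qbitn_split // ?add1n ?ltnS //= subn1; apply.
Qed.

Definition tensor_mx n (f : nat -> bool -> bool -> algC) : 'M[algC]_(2 ^ n) :=
  \matrix_(i, j) \prod_(0 <= q < n) f q (qbitn n q i) (qbitn n q j).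

Lemma tensor_mxM n f g : tensor_mx n f *m tensor_mx n g =
  tensor_mx n (fun q x y => f q x false * g q false y + f q x true * g q true y).
Proof.
apply/matrixP => i j; rewrite !mxE.
rewrite -(sum_prod_qbitn n (fun q z => f q (qbitn n q i) z * g q z (qbitn n q j))).
by rewrite big_mkord; apply: eq_bigr => l _; rewrite !mxE -big_split.
Qed.

Lemma mxtrace_tensor n f :
  \tr (tensor_mx n f) = \prod_(0 <= q < n) (f q false false + f q true true).
Proof.
rewrite /mxtrace -(sum_prod_qbitn n (fun q z => f q z z)) big_mkord.
by apply: eq_bigr => l _; rewrite !mxE.
Qed.

Lemma tensor_mxZ n (c : nat -> algC) f :
  tensor_mx n (fun q x y => c q * f q x y) = (\prod_(0 <= q < n) c q) *: tensor_mx n f.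
Proof. by apply/matrixP => i j; rewrite !mxE big_split. Qed.

Lemma adj_tensor_mx n f : adj _ _ (tensor_mx n f) = tensor_mx n (fun q x y => (f q y x)^*).
Proof. by apply/matrixP => i j; rewrite /adj !mxE rmorph_prod. Qed.

Lemma eq_tensor_mx n f g : (forall q x y, (q < n)%N -> f q x y = g q x y) ->
  tensor_mx n f = tensor_mx n g.
Proof.
move=> eq_fg; apply/matrixP => i j; rewrite !mxE.
by apply: congr_big_nat => // q /andP[_ qn]; apply: eq_fg.
Qed.

Lemma prod_qbitn_eq n (i j : 'I_(2 ^ n)) :
  \prod_(0 <= q < n) (qbitn n q i == qbitn n q j)%:R = (i == j)%:R :> algC.
Proof.
have [->|ij] := eqVneq i j; first by rewrite big1 // => q _; rewrite eqxx.
have /existsP[q neq_q] : [exists q : 'I_n, qbitn n q i != qbitn n q j].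
  rewrite -negb_forall; apply: contra ij => /forallP eq_q.
  apply/eqP/val_inj; apply: qbitn_inj (ltn_ord i) (ltn_ord j) _ => q qn.
  exact/eqP/(eq_q (Ordinal qn)).
apply/eqP; rewrite big_mkcond prodf_seq_eq0; apply/hasP; exists (val q).
  by rewrite mem_index_iota /=.
by rewrite /= (negbTE neq_q).
Qed.

Lemma tensor_mx1 n : tensor_mx n (fun _ x y => (x == y)%:R) = 1%:M.
Proof. by apply/matrixP => i j; rewrite !mxE prod_qbitn_eq. Qed.

(** * Single-qubit Pauli matrices *)

(* Products of I, X, Y, Z (coded 0..3) up to phase, e.g. X Y = i Z; [pphase] is the phase. *)
Definition pmul_nat (a b : nat) : nat :=
  match a, b with
  | 0, b => b | a, 0 => a
  | 1, 1 => 0 | 1, 2 => 3 | 1, _ => 2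
  | 2, 1 => 3 | 2, 2 => 0 | 2, _ => 1
  | _, 1 => 2 | _, 2 => 1 | _, _ => 0 end%N.

Ltac case_pauli a := case: a => [[|[|[|[|?]]]] ?] //.

Lemma pmul_nat_lt (a b : 'I_4) : (pmul_nat a b < 4)%N.
Proof. by case_pauli a; case_pauli b. Qed.

Definition pmul (a b : 'I_4) : 'I_4 := Ordinal (pmul_nat_lt a b).

Definition pphase (a b : nat) : algC :=
  match a, b with
  | 1%N, 2%N => 'i | 2%N, 1%N => - 'i | 2%N, 3%N => 'i | 3%N, 2%N => - 'i
  | 3%N, 1%N => 'i | 1%N, 3%N => - 'i | _, _ => 1 end.

(* Two Pauli matrices anticommute iff both are non-trivial and distinct. *)
Definition pcomm_sign (a b : nat) : algC :=
  if [&& a != 0, b != 0 & a != b]%N then -1 else 1.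

Lemma sigmaM a b x y :
  sigma a x false * sigma b false y + sigma a x true * sigma b true y =
  pphase a b * sigma (pmul a b) x y.
Proof.
have iiE : 'i * 'i = -1 :> algC by rewrite -expr2 sqrCi.
case_pauli a; case_pauli b; case: x; case: y;
  rewrite /sigma /= ?mulr0 ?mul0r ?mulr1 ?mul1r ?addr0 ?add0r ?mulrN ?mulNr ?opprK ?iiE
          ?mulN1r ?mulrN1 ?opprK //.
all: by rewrite ?mulr1 ?mul1r.
Qed.

Lemma conj_sigma a x y : (sigma a y x)^* = sigma a x y.
Proof.
by case_pauli a; case: x; case: y;
  rewrite /sigma /= ?rmorph0 ?rmorph1 ?rmorphN /= ?conjCi ?opprK ?rmorph1.
Qed.

Lemma pmulC a b : pmul a b = pmul b a.
Proof. by apply: val_inj; case_pauli a; case_pauli b. Qed.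

Lemma pphaseC (a b : 'I_4) : pphase a b = pcomm_sign a b * pphase b a.
Proof.
by case_pauli a; case_pauli b; rewrite /pcomm_sign /pphase /= ?mul1r ?mulN1r ?opprK.
Qed.

Lemma pmulxx a : pmul a a = ord0.
Proof. by apply: val_inj; case_pauli a. Qed.

Lemma pphasexx (a : 'I_4) : pphase a a = 1.
Proof. by case_pauli a. Qed.

Lemma pmul_eq0 a b : (pmul a b == ord0) = (a == b).
Proof.
apply/eqP/eqP => [/(congr1 val)|->]; last exact: pmulxx.
by apply: contra_eq => ab; apply/eqP; move: ab; case_pauli a; case_pauli b.
Qed.

Lemma pmul0r b : pmul ord0 b = b.
Proof. exact: val_inj. Qed.

Lemma pmulr0 b : pmul b ord0 = b.
Proof. by apply: val_inj; case_pauli b. Qed.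

Lemma pphase0r b : pphase b 0 = 1.
Proof. by case: b => [|[|[|[|]]]]. Qed.

Lemma pcomm_sign_pm a b : pcomm_sign a b = 1 \/ pcomm_sign a b = -1.
Proof. by rewrite /pcomm_sign; case: ifP; [right | left]. Qed.

Lemma sigma_trace a :
  sigma a false false + sigma a true true = if val a == 0%N then 2 else 0.
Proof. by case_pauli a; rewrite /sigma /= ?addrN ?addr0. Qed.

Lemma sigma_col0_norm a : `|sigma a false false| ^+ 2 + `|sigma a true false| ^+ 2 = 1.
Proof.
by case_pauli a;
  rewrite /sigma /= ?normr0 ?normr1 ?normrN ?normCi ?normr1 ?expr0n ?expr1n ?addr0 ?add0r.
Qed.

(** * Pauli strings *)

Lemma eqNmx m p (A : 'M[algC]_(m, p)) : (- A == A) = (A == 0).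
Proof.
apply/eqP/eqP => [NA|->]; last by rewrite oppr0.
have /eqP : (2%:R : algC) *: A = 0 by rewrite scaler_nat mulr2n -{1}NA addNr.
by rewrite scalemx_eq0 pnatr_eq0 => /eqP.
Qed.

Lemma scalemx_sign_inj m p (b1 b2 : bool) (A : 'M[algC]_(m, p)) : A != 0 ->
  (-1) ^+ b1 *: A = (-1) ^+ b2 *: A -> b1 = b2.
Proof.
move=> A0; case: b1; case: b2 => //=; rewrite expr1 expr0 scaleN1r scale1r => /eqP.
  by rewrite eqNmx (negbTE A0).
by rewrite eq_sym eqNmx (negbTE A0).
Qed.

Section PauliStrings.
Context {n : nat}.
Implicit Types a b d e : pauli_string n.
Local Notation P := (pauli_op n).

(* [pauli_at a] extends [a] by the identity to all of nat, to fit [tensor_mx]. *)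
Definition pauli_at a (q : nat) : 'I_4 :=
  if @insub _ (fun x => x < n)%N 'I_n q is Some q' then a q' else ord0.

Lemma pauli_at_lt a q (qn : (q < n)%N) : pauli_at a q = a (Ordinal qn).
Proof. by rewrite /pauli_at insubT. Qed.

Lemma pauli_atE a (q : 'I_n) : pauli_at a q = a q.
Proof. by case: q => q qn; rewrite pauli_at_lt. Qed.

Lemma pauli_opE a : P a = tensor_mx n (fun q => sigma (pauli_at a q)).
Proof.
apply/matrixP => i j; rewrite !mxE big_mkord.
by apply: eq_bigr => q _; rewrite pauli_atE.
Qed.

Definition pauli_mul a b : pauli_string n := [ffun q => pmul (a q) (b q)].
Definition pauli_phase a b : algC := \prod_(0 <= q < n) pphase (pauli_at a q) (pauli_at b q).
Definition pauli_comm_sign a b : algC :=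
  \prod_(0 <= q < n) pcomm_sign (pauli_at a q) (pauli_at b q).

Lemma pauli_opM a b : P a *m P b = pauli_phase a b *: P (pauli_mul a b).
Proof.
rewrite !pauli_opE tensor_mxM -tensor_mxZ; apply: eq_tensor_mx => q x y qn.
by rewrite sigmaM !pauli_at_lt ffunE.
Qed.

Lemma adj_pauli_op a : adj _ _ (P a) = P a.
Proof.
by rewrite pauli_opE adj_tensor_mx; apply: eq_tensor_mx => q x y _; rewrite conj_sigma.
Qed.

Lemma pauli_op_id : P (identity_string n) = 1%:M.
Proof.
rewrite pauli_opE -tensor_mx1; apply: eq_tensor_mx => q x y qn.
by rewrite pauli_at_lt ffunE.
Qed.

Lemma pauli_opxx a : P a *m P a = 1%:M.
Proof.
rewrite pauli_opM /pauli_phase big1 ?scale1r => [|q _]; last exact: pphasexx.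
by rewrite -pauli_op_id; congr P; apply/ffunP => q; rewrite !ffunE pmulxx.
Qed.

Lemma pauli_op_comm a b : P a *m P b = pauli_comm_sign a b *: (P b *m P a).
Proof.
rewrite !pauli_opM scalerA; congr (_ *: P _).
  by rewrite -big_split; apply: eq_bigr => q _; rewrite pphaseC.
by apply/ffunP => q; rewrite !ffunE pmulC.
Qed.

Lemma pauli_comm_sign_pm a b : pauli_comm_sign a b = 1 \/ pauli_comm_sign a b = -1.
Proof.
apply: (big_ind (fun x : algC => x = 1 \/ x = -1)); first by left.
  by move=> x y [->|->] [->|->]; rewrite ?mulr1 ?mulrN1 ?opprK; auto.
by move=> q _; apply: pcomm_sign_pm.
Qed.

Lemma mxtrace_pauli_op a : a != identity_string n -> \tr (P a) = 0.
Proof.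
move=> a_id; rewrite pauli_opE mxtrace_tensor; apply/eqP.
have /existsP[q aq] : [exists q, a q != ord0].
  apply: contraR a_id; rewrite negb_exists => /forallP a0.
  by apply/eqP/ffunP => q; rewrite ffunE; apply/eqP; move: (a0 q); rewrite negbK.
rewrite big_mkcond prodf_seq_eq0; apply/hasP; exists (val q).
  by rewrite mem_index_iota ltn_ord.
by rewrite /= pauli_atE sigma_trace; case: (a q) aq => [[|m] pm].
Qed.

Lemma mxtrace_pauli_opM a b : a != b -> \tr (P a *m P b) = 0.
Proof.
move=> ab; rewrite pauli_opM mxtraceZ mxtrace_pauli_op ?mulr0 //.
apply: contra ab => /eqP/ffunP ab; apply/eqP/ffunP => q.
by have := ab q; rewrite !ffunE => /eqP; rewrite pmul_eq0 => /eqP.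
Qed.

Lemma scalar_mx1_neq0 : (1%:M : 'M[algC]_(2 ^ n)) != 0.
Proof.
have i0 : (0 < 2 ^ n)%N by rewrite expn_gt0.
apply/negP => /eqP/matrixP/(_ (Ordinal i0) (Ordinal i0)).
by rewrite !mxE eqxx /= => /eqP; rewrite oner_eq0.
Qed.

Lemma pauli_op_neq0 a : P a != 0.
Proof.
by apply: contraNneq scalar_mx1_neq0 => Pa0; rewrite -(pauli_opxx a) Pa0 mul0mx.
Qed.

Lemma pauli_op_mul_neq0 a b : P a *m P b != 0.
Proof.
apply: contra (pauli_op_neq0 a) => /eqP ab0.
by rewrite -[P a]mulmx1 -(pauli_opxx b) mulmxA ab0 mul0mx.
Qed.

(* Pauli operators are linearly independent: the trace form separates them. *)
Lemma pauli_op_scale_inj a b (c c' : algC) :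
  c *: P a = c' *: P b -> c != 0 -> a = b.
Proof.
move=> eq_ab c0; apply/eqP; apply: contraT => ab.
have := congr1 (fun M => \tr (M *m P a)) eq_ab.
rewrite -!scalemxAl !mxtraceZ pauli_opxx mxtrace_pauli_opM 1?eq_sym //.
rewrite mxtrace1 mulr0 => /eqP; rewrite mulf_eq0 (negbTE c0) /=.
by rewrite pnatr_eq0 expn_eq0.
Qed.

Lemma pauli_atZ x q :
  (pauli_at (Zstring n x) q : nat) = if (q < n)%N && (q == x) then 3%N else 0%N.
Proof.
case: (ltnP q n) => qn /=; last by rewrite /pauli_at insubF // ltnNge qn.
by rewrite pauli_at_lt ffunE; case: eqP => //= _; rewrite inordK.
Qed.

Lemma pauli_comm_signZZ x y : pauli_comm_sign (Zstring n x) (Zstring n y) = 1.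
Proof.
rewrite /pauli_comm_sign big1 // => q _; rewrite /pcomm_sign !pauli_atZ.
by case: (_ && (q == x)); case: (_ && (q == y)).
Qed.

Lemma pauli_op_commZ d x : (x < n)%N ->
  P d *m P (Zstring n x) = P (Zstring n x) *m P d -> (pauli_at d x : nat) \in [:: 0%N; 3%N].
Proof.
move=> xn comm; have sign1 : pauli_comm_sign d (Zstring n x) = 1.
  move: comm; rewrite pauli_op_comm; case: (pauli_comm_sign_pm d (Zstring n x)) => -> //.
  by rewrite scaleN1r => /eqP; rewrite eqNmx (negbTE (pauli_op_mul_neq0 _ _)).
move: sign1; rewrite /pauli_comm_sign (bigD1_seq x) ?mem_index_iota ?iota_uniq //=.
rewrite big1_seq ?mulr1 => [|q /andP[qx _]]; last first.
  by rewrite /pcomm_sign pauli_atZ (negbTE qx) andbF /= andbF.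
rewrite pauli_atZ xn eqxx /=; case: (pauli_at d x) => [[|[|[|[|?]]]] ?] //;
by rewrite /pcomm_sign /= => /eqP; rewrite eqNr oner_eq0.
Qed.

End PauliStrings.

(** * Unitary and Clifford conjugation *)

Lemma adjM m p r (A : 'M[algC]_(m, p)) (B : 'M[algC]_(p, r)) :
  adj _ _ (A *m B) = adj _ _ B *m adj _ _ A.
Proof. by rewrite /adj map_mxM trmx_mul. Qed.

Lemma adjZ m p c (A : 'M[algC]_(m, p)) : adj _ _ (c *: A) = c^* *: adj _ _ A.
Proof. by rewrite /adj map_mxZ linearZ. Qed.

Lemma adjK m p (A : 'M[algC]_(m, p)) : adj _ _ (adj _ _ A) = A.
Proof. by apply/matrixP => i j; rewrite !mxE conjCK. Qed.

Section UnitaryConj.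
Context {N : nat} {U : 'M[algC]_N} (unitaryU : unitary N U).
Local Notation Ua := (adj N N U).

Lemma conjK X : U *m (Ua *m X *m U) *m Ua = X.
Proof. by case: unitaryU => UUa _; rewrite !mulmxA UUa mul1mx -!mulmxA UUa mulmx1. Qed.

Lemma adj_conjK X : Ua *m (U *m X *m Ua) *m U = X.
Proof. by case: unitaryU => _ UaU; rewrite !mulmxA UaU mul1mx -!mulmxA UaU mulmx1. Qed.

Lemma conjM X Y : (U *m X *m Ua) *m (U *m Y *m Ua) = U *m (X *m Y) *m Ua.
Proof. by case: unitaryU => _ UaU; rewrite !mulmxA -[U *m X *m Ua *m U]mulmxA UaU mulmx1. Qed.

Lemma adj_conjM X Y : (Ua *m X *m U) *m (Ua *m Y *m U) = Ua *m (X *m Y) *m U.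
Proof. by case: unitaryU => UUa _; rewrite !mulmxA -[Ua *m X *m U *m Ua]mulmxA UUa mulmx1. Qed.

End UnitaryConj.

Lemma unitary_pauli_norm n (X : 'M[algC]_(2 ^ n)) lam d :
  X *m adj _ _ X = 1%:M -> X = lam *: pauli_op n d -> `|lam| ^+ 2 = 1.
Proof.
move=> + eqX; rewrite eqX adjZ adj_pauli_op -scalemxAl -scalemxAr scalerA.
rewrite pauli_opxx normCK => /eqP; rewrite -subr_eq0 -{2}(scale1r 1%:M) -scalerBl.
by rewrite scalemx_eq0 (negbTE (@scalar_mx1_neq0 n)) orbF subr_eq0 => /eqP.
Qed.

Section Clifford.
Context {n : nat} {U : 'M[algC]_(2 ^ n)} (cliffU : clifford n U).
Local Notation P := (pauli_op n).
Local Notation Ua := (adj _ _ U).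

Lemma clifford_conj_pauli : exists2 f : pauli_string n -> pauli_string n,
  injective f & forall a, exists2 c, c != 0 & U *m P a *m Ua = c *: P (f a).
Proof.
have [unitaryU conjP] := cliffU.
(* The coefficient is recovered from the trace form, so the choice of b is decidable. *)
pose coef a b := \tr (P b *m (U *m P a *m Ua)) / (2 ^ n)%:R.
have coefP a : exists b, U *m P a *m Ua == coef a b *: P b.
  have [b [c conj_a]] := conjP a; exists b.
  by rewrite /coef conj_a -scalemxAr mxtraceZ pauli_opxx mxtrace1 mulfK ?pnatr_eq0 ?expn_eq0.
pose f a := xchoose (coefP a).
have fP a : U *m P a *m Ua = coef a (f a) *: P (f a) by exact/eqP/(xchooseP (coefP a)).
have coef_neq0 a : coef a (f a) != 0.
  apply: contra (pauli_op_neq0 a) => /eqP c0.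
  by rewrite -(adj_conjK unitaryU (P a)) fP c0 scale0r mulmx0 mul0mx.
exists f => [a1 a2 fa12|a]; last by exists (coef a (f a)).
have := adj_conjK unitaryU (P a1); have := adj_conjK unitaryU (P a2).
rewrite !fP fa12 -!scalemxAr -!scalemxAl => Pa2 Pa1.
apply: (@pauli_op_scale_inj n _ _ (coef a2 (f a2)) (coef a1 (f a2))) => //.
by rewrite -Pa1 -Pa2 !scalerA mulrC.
Qed.

(* Conjugation by U permutes the finitely many Pauli strings, so U^dag also conjugates
   Paulis to Paulis. *)
Lemma clifford_adj_conj b : exists a c, Ua *m P b *m U = c *: P a.
Proof.
have [f injf fP] := clifford_conj_pauli; have [g fg gf] := injF_bij injf.
have [c c0 Pgb] := fP (g b); exists (g b), c^-1.
have := adj_conjK cliffU.1 (P (g b)); rewrite Pgb gf -scalemxAr -scalemxAl => <-.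
by rewrite scalerA mulVf ?scale1r.
Qed.

End Clifford.

(** * Data and ancilla qubits *)

Lemma sum_ord_delta N (G : 'I_N -> algC) v (vN : (v < N)%N) :
  \sum_(i < N) G i * ((i : nat) == v)%:R = G (Ordinal vN).
Proof.
rewrite (bigD1 (Ordinal vN)) //= eqxx mulr1 big1 ?addr0 // => i.
by rewrite -val_eqE /= => /negbTE ->; rewrite mulr0.
Qed.

Lemma prod_sigma_split k m (F : nat -> 'I_4) c l : (l < 2 ^ m)%N ->
  \prod_(0 <= q < k + m)
    sigma (F q) (qbitn (k + m) q (c * 2 ^ m + l)) (qbitn (k + m) q (c * 2 ^ m)) =
  (\prod_(0 <= q < k) sigma (F q) (qbitn k q c) (qbitn k q c)) *
  \prod_(0 <= r < m) sigma (F (k + r)%N) (qbitn m r l) false.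
Proof.
move=> lm; rewrite (big_cat_nat (leq0n k) (leq_addr m k)) /=; congr (_ * _).
  apply: eq_big_nat => q /andP[_ qk].
  have qkm : (q < k + m)%N by exact: leq_trans qk (leq_addr _ _).
  by rewrite qbitn_split // qk qbitn_low.
rewrite -{1}[k]add0n big_addn addKn; apply: eq_big_nat => r /andP[_ rm].
have rkm : (r + k < k + m)%N by rewrite addnC ltn_add2l.
by rewrite qbitn_split // qbitn_high ?leq_addl // ltnNge leq_addl /= addnK addnC.
Qed.

Definition acts_on_ancillas n k (d : pauli_string n) : bool :=
  [forall q : 'I_n, (q < k)%N ==> (d q == ord0)].

Definition ancilla_prefix n k (d : pauli_string n) t : pauli_string n :=
  [ffun q : 'I_n => if (k + t <= q)%N then ord0 else d q].

Section DataAncilla.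
Context {n k : nat} (kn : (k <= n)%N).
Implicit Types d : pauli_string n.
Local Notation P := (pauli_op n).

Lemma ket_index_lt (c : 'I_(2 ^ k)) l : (l < 2 ^ (n - k))%N -> (c * 2 ^ (n - k) + l < 2 ^ n)%N.
Proof.
move=> ln; rewrite -{2}(subnKC kn) expnD.
have := ltn_ord c; move: ln; set M := (2 ^ (n - k))%N; set K := (2 ^ k)%N; nia.
Qed.

Lemma ket0_index_lt (c : 'I_(2 ^ k)) : (c * 2 ^ (n - k) < 2 ^ n)%N.
Proof. by have := @ket_index_lt c 0; rewrite addn0 expn_gt0; apply. Qed.

Lemma Zstring_ket0 x : (k <= x)%N -> P (Zstring n x) *m ket0 n k = ket0 n k.
Proof.
move=> kx; apply/matrixP => i c; have vlt := ket0_index_lt c.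
rewrite mxE (eq_bigr (fun j => P (Zstring n x) i j * ((j : nat) == c * 2 ^ (n - k))%N%:R));
  last by move=> j _; rewrite [ket0 _ _ _ _]mxE.
rewrite (sum_ord_delta _ _ _ vlt) [RHS]mxE.
rewrite -[RHS](@prod_qbitn_eq n i (Ordinal vlt)) pauli_opE mxE.
apply: eq_big_nat => q /andP[_ qn].
rewrite pauli_at_lt ffunE /=; case: eqP => [qx|//].
have -> : qbitn n q (c * 2 ^ (n - k)) = false.
  by rewrite -{1}(subnKC kn) qbitn_high ?subnKC // qx.
by rewrite /sigma /= inordK //=; case: (qbitn n q i).
Qed.

Lemma mxtrace_braL_pauli_ket0 d l : (l < 2 ^ (n - k))%N ->
  \tr (braL n k l *m P d *m ket0 n k) =
  (\prod_(0 <= q < k) (sigma (pauli_at d q) false false + sigma (pauli_at d q) true true)) *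
  \prod_(0 <= r < n - k) sigma (pauli_at d (k + r)) (qbitn (n - k) r l) false.
Proof.
move=> ln; rewrite /mxtrace -(sum_prod_qbitn k (fun q x => sigma (pauli_at d q) x x)).
rewrite (@big_mkord _ _ _ (2 ^ k)) mulr_suml; apply: eq_bigr => c _.
have vlt := ket0_index_lt c; have wlt := @ket_index_lt c l ln.
rewrite mxE (eq_bigr (fun j => (braL n k l *m P d) c j * ((j : nat) == c * 2 ^ (n - k))%N%:R));
  last by move=> j _; rewrite [ket0 _ _ _ _]mxE.
rewrite (sum_ord_delta _ _ _ vlt) mxE.
rewrite (eq_bigr (fun i => P d i (Ordinal vlt) * ((i : nat) == c * 2 ^ (n - k) + l)%N%:R));
  last by move=> i _; rewrite [braL _ _ _ _ _]mxE mulrC.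
rewrite (sum_ord_delta _ _ _ wlt) pauli_opE mxE /=.
by have := @prod_sigma_split k (n - k) (pauli_at d) c l ln; rewrite subnKC.
Qed.

Lemma sum_norm_mxtrace_braL_pauli_ket0 d :
  \sum_(l < 2 ^ (n - k)) `|\tr (braL n k l *m P d *m ket0 n k)| ^+ 2 =
  if acts_on_ancillas n k d then (2 ^ (2 * k))%:R else 0.
Proof.
under eq_bigr => l _ do rewrite mxtrace_braL_pauli_ket0 // normrM exprMn.
rewrite -mulr_sumr.
have -> : \sum_(l < 2 ^ (n - k))
    `|\prod_(0 <= r < n - k) sigma (pauli_at d (k + r)) (qbitn (n - k) r l) false| ^+ 2 = 1.
  transitivity (\prod_(0 <= r < n - k) (`|sigma (pauli_at d (k + r)) false false| ^+ 2 +
                                       `|sigma (pauli_at d (k + r)) true false| ^+ 2)).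
    rewrite -(sum_prod_qbitn (n - k) (fun r x => `|sigma (pauli_at d (k + r)) x false| ^+ 2)).
    by rewrite big_mkord; apply: eq_bigr => l _; rewrite normr_prod -prodrXl.
  by rewrite big1 // => r _; exact: sigma_col0_norm.
rewrite mulr1 normr_prod -prodrXl; case: ifP => [anc|].
  rewrite (eq_big_nat _ _ (F2 := fun _ => 4%:R)) => [|q /andP[_ qk]].
    by rewrite prodr_const_nat subn0 -natrX expnM.
  have qn : (q < n)%N by exact: leq_trans qk kn.
  move/forall_inP: anc => /(_ (Ordinal qn) qk) /eqP dq.
  by rewrite sigma_trace pauli_at_lt dq /= normr_nat -natrX.
move/negbT; rewrite negb_forall => /existsP[q]; rewrite negb_imply => /andP[qk dq].
apply/eqP; rewrite big_mkcond prodf_seq_eq0; apply/hasP; exists (val q).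
  by rewrite mem_index_iota.
by rewrite /= sigma_trace pauli_atE; case: (d q) dq => [[|?] ?]; rewrite ?normr0 ?expr0n.
Qed.

Lemma ancilla_prefix0 d : acts_on_ancillas n k d -> ancilla_prefix n k d 0 = identity_string n.
Proof.
move=> /forall_inP anc; apply/ffunP => q; rewrite !ffunE addn0.
by case: leqP => // qk; apply/eqP/anc.
Qed.

Lemma ancilla_prefix_full d : ancilla_prefix n k d (n - k) = d.
Proof. by apply/ffunP => q; rewrite ffunE subnKC // leqNgt ltn_ord. Qed.

Lemma pauli_op_ancilla_prefixS {d t} : (k + t < n)%N ->
  (pauli_at d (k + t) : nat) \in [:: 0%N; 3%N] ->
  P (ancilla_prefix n k d t.+1) = P (ancilla_prefix n k d t) \/
  P (ancilla_prefix n k d t.+1) = P (ancilla_prefix n k d t) *m P (Zstring n (k + t)).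
Proof.
move=> ktn; rewrite pauli_at_lt !inE => /orP[]/eqP dkt; [left | right].
  congr P; apply/ffunP => q; rewrite !ffunE addnS.
  case: (eqVneq (val q) (k + t)) => [qkt|]; last by rewrite ltn_neqAle eq_sym => ->.
  have -> : d q = d (Ordinal ktn) by congr (d _); exact: val_inj.
  by rewrite qkt ltnn leqnn; apply: val_inj; rewrite /= dkt.
rewrite pauli_opM /pauli_phase big1 => [|q _]; last first.
  rewrite pauli_atZ; case: ifP => [/andP[_ /eqP ->]|_]; last exact: pphase0r.
  by rewrite pauli_at_lt ffunE /= leqnn.
rewrite scale1r; congr P; apply/ffunP => q; rewrite !ffunE addnS.
case: (eqVneq (val q) (k + t)) => [qkt|qkt]; last first.
  by rewrite ltn_neqAle eq_sym (negbTE (qkt : (q : nat) != k + t)) pmulr0.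
have -> : d q = d (Ordinal ktn) by congr (d _); exact: val_inj.
by rewrite qkt ltnn leqnn pmul0r; apply: val_inj; rewrite /= inordK // dkt.
Qed.

End DataAncilla.

(** * The stabilizer code *)

Section StabilizerCode.
Context {n k : nat} {U : 'M[algC]_(2 ^ n)} {Es : syndrome_t n k -> pauli_string n}.
Context (kn : (k <= n)%N) (cliffU : clifford n U) (repsEs : syndrome_reps n k U Es).
Local Notation P := (pauli_op n).
Local Notation Ua := (adj (2 ^ n) (2 ^ n) U).
Local Notation g := (gen_g n k U).
Local Notation synd := (syndrome n k U).
Local Notation proj := (syndrome_proj n k U).
Local Notation decoded a := (Ua *m (P (Es (synd (P a))) *m P a) *m U).

Let unitaryU : unitary _ U := cliffU.1.

Lemma gen_gxx j : g j *m g j = 1%:M.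
Proof. by rewrite /gen_g (conjM unitaryU) pauli_opxx mulmx1; case: unitaryU. Qed.

Lemma gen_g_mul_neq0 j (X : 'M[algC]_(2 ^ n)) : X != 0 -> g j *m X != 0.
Proof. by apply: contra => /eqP gX0; rewrite -[X]mul1mx -(gen_gxx j) -mulmxA gX0 mulmx0. Qed.

Lemma pauli_op_gen_g b j : P b *m g j = (-1) ^+ synd (P b) j *: (g j *m P b).
Proof.
have [e [c conjZ]] := cliffU.2 (Zstring n (k + j)).
have comm : P b *m g j = pauli_comm_sign b e *: (g j *m P b).
  by rewrite /gen_g conjZ -scalemxAr -scalemxAl (pauli_op_comm b e) !scalerA mulrC.
rewrite /syndrome ffunE comm; case: (pauli_comm_sign_pm b e) => ->.
  by rewrite scale1r eqxx expr0 scale1r.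
by rewrite scaleN1r eqNmx (negbTE (@gen_g_mul_neq0 j _ (pauli_op_neq0 b))) expr1 scaleN1r.
Qed.

Lemma syndrome_projM_pauli a : proj (synd (P a)) *m P a = P a *m proj [ffun=> false].
Proof.
apply: (big_rec2 (fun X Y => X *m P a = P a *m Y)); first by rewrite mul1mx mulmx1.
move=> j X Y _ IH; rewrite -mulmxA IH !mulmxA; congr (_ *m _).
rewrite -scalemxAl -scalemxAr mulmxDl mulmxDr mul1mx mulmx1 -scalemxAl -scalemxAr.
have -> : ([ffun=> false] : syndrome_t n k) j = false by rewrite ffunE.
by rewrite expr0 scale1r pauli_op_gen_g.
Qed.

Lemma syndrome_proj0_code : proj [ffun=> false] *m (U *m ket0 n k) = U *m ket0 n k.
Proof.
apply: (big_rec (fun X => X *m (U *m ket0 n k) = U *m ket0 n k)); first by rewrite mul1mx.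
move=> j X _ IH; have -> : ([ffun=> false] : syndrome_t n k) j = false by rewrite ffunE.
rewrite -mulmxA IH expr0 scale1r -scalemxAl mulmxDl mul1mx.
have -> : g j *m (U *m ket0 n k) = U *m ket0 n k.
  by rewrite -!mulmxA [Ua *m (U *m _)]mulmxA; case: unitaryU => _ ->;
    rewrite mul1mx Zstring_ket0 ?leq_addr.
by rewrite -[X in X + X]scale1r -scalerDl scalerA mulVf ?scale1r // pnatr_eq0.
Qed.

Lemma Wop_syndrome p l a : Wop n k U Es p l a (synd (P a)) =
  sqrtC (depol_prob n p a) *: (braL n k l *m decoded a *m ket0 n k).
Proof.
rewrite /Wop -scalemxAr -!scalemxAl; congr (_ *: _).
by rewrite -!mulmxA [proj _ *m _]mulmxA syndrome_projM_pauli -mulmxA syndrome_proj0_code.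
Qed.

Lemma in_stab_comm_gen h : in_stab n k U h -> forall j, h *m g j = g j *m h.
Proof.
elim=> [|i|A B _ IHA _ IHB] j; first by rewrite mul1mx mulmx1.
  by rewrite /gen_g !(conjM unitaryU) pauli_op_comm pauli_comm_signZZ scale1r.
by rewrite -mulmxA IHB mulmxA IHA -mulmxA.
Qed.

Lemma in_stab_adj_conj {h} : in_stab n k U h ->
  exists mu e, Ua *m h *m U = mu *: P e /\ acts_on_ancillas n k e.
Proof.
elim=> [|j|A B _ [m1 [e1 [conjA ancA]]] _ [m2 [e2 [conjB ancB]]]].
- exists 1, (identity_string n); rewrite mulmx1 pauli_op_id scale1r.
  by case: unitaryU => _ ->; split=> //; apply/forall_inP => q _; rewrite ffunE.
- exists 1, (Zstring n (k + j)); rewrite (adj_conjK unitaryU) scale1r; split=> //.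
  apply/forall_inP => q qk; rewrite ffunE; case: ifP => [/eqP qkj|//].
  by move: qk; rewrite qkj ltnNge leq_addr.
- exists (m1 * m2 * pauli_phase e1 e2), (pauli_mul e1 e2); split.
    by rewrite -(adj_conjM unitaryU) conjA conjB -scalemxAl -scalemxAr pauli_opM !scalerA.
  apply/forall_inP => q qk; rewrite ffunE.
  by move/forall_inP: ancA => /(_ q qk)/eqP ->; move/forall_inP: ancB => /(_ q qk)/eqP ->.
Qed.

Lemma syndrome_TxS {s h c a} : in_stab n k U h -> c != 0 ->
  P a = c *: (P (Es s) *m h) -> synd (P a) = s.
Proof.
move=> stab_h c0 Pa; apply/ffunP => j; rewrite -[s in RHS](repsEs.1 s).
apply: (@scalemx_sign_inj _ _ _ _ (g j *m P a)); first exact/gen_g_mul_neq0/pauli_op_neq0.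
rewrite -pauli_op_gen_g Pa -scalemxAl -scalemxAr scalerA mulrC -scalerA; congr (_ *: _).
by rewrite -mulmxA in_stab_comm_gen // mulmxA pauli_op_gen_g -scalemxAl -mulmxA.
Qed.

Lemma in_TxS_acts_on_ancillas {a d lam} : lam != 0 ->
  decoded a = lam *: P d ->
  in_TxS n k U Es (P a) -> acts_on_ancillas n k d.
Proof.
move=> lam0 conjEa [s [h [c [stab_h Pa]]]].
have c0 : c != 0 by apply: contra (pauli_op_neq0 a) => /eqP c0; rewrite Pa c0 scale0r.
have [mu [e [conj_h anc_e]]] := in_stab_adj_conj stab_h.
suff: lam *: P d = (c * mu) *: P e by move/pauli_op_scale_inj => ->.
rewrite -conjEa (syndrome_TxS stab_h c0 Pa) Pa -!scalemxAr -scalemxAl.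
by rewrite [P _ *m (_ *m h)]mulmxA pauli_opxx mul1mx conj_h scalerA.
Qed.

Lemma in_stab_conj_pauli d : acts_on_ancillas n k d ->
  (forall j : 'I_(n - k), (pauli_at d (k + j) : nat) \in [:: 0%N; 3%N]) ->
  in_stab n k U (U *m P d *m Ua).
Proof.
move=> anc_d ancZ; rewrite -(ancilla_prefix_full kn d).
suff: forall t, (t <= n - k)%N -> in_stab n k U (U *m P (ancilla_prefix n k d t) *m Ua).
  exact.
elim=> [_|t IH tnk].
  by rewrite ancilla_prefix0 // pauli_op_id mulmx1; case: unitaryU => -> _; exact: stab_one.
have ktn : (k + t < n)%N by rewrite -ltn_subRL.
have [->|->] := pauli_op_ancilla_prefixS ktn (ancZ (Ordinal tnk)); first exact/IH/ltnW.
rewrite -(conjM unitaryU); apply: stab_mul; first exact/IH/ltnW.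
exact: (stab_gen _ _ _ (Ordinal tnk)).
Qed.

Lemma acts_on_ancillas_in_TxS {a d lam} : lam != 0 ->
  decoded a = lam *: P d ->
  acts_on_ancillas n k d -> in_TxS n k U Es (P a).
Proof.
move=> lam0 conjEa anc_d; set Ea := P (Es (synd (P a))) *m P a in conjEa *.
have Ea_comm j : Ea *m g j = g j *m Ea.
  rewrite -mulmxA pauli_op_gen_g -scalemxAr mulmxA pauli_op_gen_g repsEs.1.
  by rewrite -scalemxAl -mulmxA scalerA -exprMn mulrNN mulr1 expr1n scale1r.
have ancZ (j : 'I_(n - k)) : (pauli_at d (k + j) : nat) \in [:: 0%N; 3%N].
  apply: pauli_op_commZ; first by rewrite -ltn_subRL.
  have := congr1 (fun M => Ua *m M *m U) (Ea_comm j).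
  rewrite /= -(adj_conjM unitaryU Ea) -(adj_conjM unitaryU (g j)) conjEa.
  rewrite /gen_g (adj_conjK unitaryU).
  by rewrite -scalemxAl -scalemxAr; apply: scalerI.
exists (synd (P a)), (U *m P d *m Ua), lam; split; first exact: in_stab_conj_pauli.
by rewrite scalemxAr scalemxAl scalemxAr -conjEa (conjK unitaryU) mulmxA pauli_opxx mul1mx.
Qed.

Lemma in_TxSE {a d lam} : lam != 0 -> decoded a = lam *: P d ->
  in_TxS n k U Es (P a) <-> acts_on_ancillas n k d.
Proof.
move=> lam0 conjEa.
split; first exact: in_TxS_acts_on_ancillas lam0 conjEa.
exact: acts_on_ancillas_in_TxS lam0 conjEa.
Qed.

Lemma adj_conj_pauliM_norm {e a d lam} :
  Ua *m (P e *m P a) *m U = lam *: P d -> `|lam| ^+ 2 = 1.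
Proof.
apply: unitary_pauli_norm; rewrite !adjM adjK !adj_pauli_op.
have [UUa UaU] := unitaryU; rewrite !mulmxA -[_ *m U *m Ua]mulmxA UUa mulmx1.
rewrite -[_ *m P a *m P a]mulmxA pauli_opxx mulmx1.
by rewrite -[_ *m P e *m P e]mulmxA pauli_opxx mulmx1 UaU.
Qed.

Lemma decoded_pauli a : exists d lam, lam != 0 /\ decoded a = lam *: P d.
Proof.
have [d [c conjEa]] := clifford_adj_conj cliffU (pauli_mul (Es (synd (P a))) a).
exists d, (pauli_phase (Es (synd (P a))) a * c).
have decodedE : decoded a = (pauli_phase (Es (synd (P a))) a * c) *: P d.
  by rewrite pauli_opM -scalemxAr -scalemxAl conjEa scalerA.
split=> //; rewrite -normr_eq0 -(sqrf_eq0 `|_|) (adj_conj_pauliM_norm decodedE).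
exact: oner_neq0.
Qed.

Lemma sum_norm_mxtrace_Wop {p a d lam} : 0 <= depol_prob n p a ->
  decoded a = lam *: P d ->
  \sum_(l < 2 ^ (n - k)) `|\tr (Wop n k U Es p l a (synd (P a)))| ^+ 2 =
  depol_prob n p a * if acts_on_ancillas n k d then (2 ^ (2 * k))%:R else 0.
Proof.
move=> p_ge0 conjEa; have lam1 := adj_conj_pauliM_norm conjEa.
under eq_bigr => l _ do rewrite Wop_syndrome conjEa -scalemxAr -scalemxAl !mxtraceZ
  !normrM !exprMn lam1 mul1r ger0_norm ?sqrtC_ge0 // sqrtCK.
by rewrite -mulr_sumr sum_norm_mxtrace_braL_pauli_ket0.
Qed.

End StabilizerCode.

Lemma depol_prob_ge0 {n p} (a : pauli_string n) : 0 <= p <= 1 -> 0 <= depol_prob n p a.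
Proof.
case/andP=> p0 p1; apply/mulr_ge0/exprn_ge0; last by rewrite divr_ge0 ?ler0n.
apply/exprn_ge0; rewrite subr_ge0; apply: le_trans _ p1.
by rewrite ler_piMl // ler_pdivrMr ?ltr0n // mul1r ler_nat.
Qed.

Theorem lemma3 (n k : nat) (U : 'M[algC]_(2 ^ n))
  (Es : syndrome_t n k -> pauli_string n) (p : algC) (a : pauli_string n) :
  (k <= n)%N -> clifford n U -> syndrome_reps n k U Es -> 0 <= p <= 1 ->
  let lhs := (2 ^ (2 * k))%:R^-1 *
    \sum_(l < 2 ^ (n - k))
      `|\tr (Wop n k U Es p l a (syndrome n k U (pauli_op n a)))| ^+ 2 in
  (in_TxS n k U Es (pauli_op n a) -> lhs = depol_prob n p a) /\
  (~ in_TxS n k U Es (pauli_op n a) -> lhs = 0).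
Proof.
move=> kn cliffU repsEs p01 lhs.
have [d [lam [lam0 decodedE]]] := @decoded_pauli _ k _ Es cliffU a.
have TxSE := in_TxSE kn cliffU repsEs lam0 decodedE.
have -> : lhs = depol_prob n p a * (acts_on_ancillas n k d)%:R.
  rewrite /lhs (sum_norm_mxtrace_Wop kn cliffU (depol_prob_ge0 a p01) decodedE).
  case: ifP => _; last by rewrite !mulr0.
  by rewrite mulr1 mulrCA mulVf ?mulr1 // pnatr_eq0 expn_eq0.
split=> [/TxSE -> | notTxS]; first by rewrite mulr1.
have /negbTE -> : ~~ acts_on_ancillas n k d by apply/negP => /TxSE.
by rewrite mulr0.
Qed.
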